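(* Let $n\ge 1$, let $C=(c_{i,j})$ be an $n\times n$ Bott matrix over $\mathbb{Z}_2$, and let $Y_n=Y(C)$ be the associated real Bott tower. Let $W$ be the right-angled Coxeter group with generators $s_1,\dots,s_{2n}$ and relations $s_j^2=1$ for $1\le j\le 2n$ and $(s_is_j)^2=1$ for all $1\le i<j\le 2n$ with $j\neq i+n$. For $n+1\le j\le 2n$ put $$\alpha_j:=s_j\,s_{j-n}\,s_{j-n+1}^{c_{j-n,j-n+1}}\,s_{j-n+2}^{c_{j-n,j-n+2}}\cdots s_n^{c_{j-n,n}}\in W$$ (so $\alpha_{2n}=s_{2n}s_n$). Then $\pi_1(Y_n)$, viewed as the kernel of the homomorphism $W\to\mathbb{Z}_2^n$ sending $s_i\mapsto\lambda(F_i)$, is generated by $\{\alpha_j: n+1\le j\le 2n\}$, and a complete set of defining relations for $\pi_1(Y_n)$ on these generators is $\{x_{p,q}: n+1\le p<q\le 2n\}$, where $$x_{p,q}=\begin{cases}\alpha_p\alpha_q\alpha_p^{-1}\alpha_q^{-1} & \text{if } c_{p-n,q-n}=0,\\ \alpha_p\alpha_q^{-1}\alpha_p^{-1}\alpha_q^{-1} & \text{if } c_{p-n,q-n}=1.\end{cases}$$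
   Context: A Bott matrix is an $n\times n$ matrix $C=(c_{i,j})$ with entries in $\mathbb{Z}_2=\mathbb{Z}/2\mathbb{Z}$ such that $c_{i,i}=1$ and $c_{i,j}=0$ for $i>j$. Let $I^n$ be the $n$-cube, with its $2n$ facets labelled $F_1,\dots,F_{2n}$ so that $F_j$ and $F_{n+j}$ are opposite (disjoint) facets for $1\le j\le n$. Let $e_1,\dots,e_n$ be the standard basis of $\mathbb{Z}_2^n$ and define $\lambda(F_j)=e_j$ and $\lambda(F_{n+j})=e_j+\sum_{k=j+1}^n c_{j,k}e_k$ for $1\le j\le n$. The real Bott tower $Y_n=Y(C)$ is the small cover $(\mathbb{Z}_2^n\times I^n)/\sim$, where $(t,p)\sim(t',p')$ iff $p=p'$ and $t-t'$ lies in the subgroup of $\mathbb{Z}_2^n$ spanned by $\lambda(F)$ for the facets $F$ containing $p$. Equivalently, $Y_n$ is the real toric variety of the complete smooth fan in $\mathbb{R}^n$ whose cones are spanned by subsets of $\{v_1,\dots,v_{2n}\}$ not containing both $v_i$ and $v_{n+i}$, where $v_j=e_j$ and $v_{n+j}=-e_j+\sum_{k>j}c_{j,k}e_k$. It is a closed smooth $n$-manifold obtained as an iterated $\mathbb{R}P^1$-bundle. *)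

From mathcomp Require Import all_boot all_algebra.
Set Implicit Arguments. Unset Strict Implicit. Unset Printing Implicit Defensive.
Import GRing.Theory.
Local Open Scope ring_scope.

(** Words in the free group on generators of type I: a letter (x, true) is
    the generator x, (x, false) its inverse. *)
Definition word (I : Type) := seq (I * bool).
Definition linv (I : Type) (l : I * bool) : I * bool := (l.1, ~~ l.2).
Definition winv (I : Type) (w : word I) : word I := rev (map (@linv I) w).

Inductive pres_eq (I : Type) (R : word I -> Prop) : word I -> word I -> Prop :=
| pres_refl w : pres_eq R w w
| pres_sym u v : pres_eq R u v -> pres_eq R v u
| pres_trans u v w : pres_eq R u v -> pres_eq R v w -> pres_eq R u w
| pres_cancel u v x b :
    pres_eq R (u ++ (x, b) :: (x, ~~ b) :: v) (u ++ v)
| pres_rel u v r : R r -> pres_eq R (u ++ r ++ v) (u ++ v).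

Definition subst_word (I J : Type) (f : I -> word J) (w : word I) : word J :=
  flatten (map (fun l => if l.2 then f l.1 else winv (f l.1)) w).

Definition is_bott_matrix (n : nat) (C : 'M['F_2]_n) : Prop :=
  (forall i, C i i = 1) /\ (forall i j : 'I_n, (j < i)%N -> C i j = 0).

(** Facets of I^n: index i : 'I_(n+n) (0-based); lshift n j is F_{j+1},
    rshift n j is F_{n+j+1}; they are opposite. *)
Definition evec (n : nat) (j : 'I_n) : 'rV['F_2]_n := \row_k (k == j)%:R.

Definition lam (n : nat) (C : 'M['F_2]_n) (i : 'I_(n + n)) : 'rV['F_2]_n :=
  match split i with
  | inl j => evec j
  | inr j => evec j + \sum_(k < n | (j < k)%N) C j k *: evec k
  end.

Definition phi (n : nat) (C : 'M['F_2]_n) (w : word 'I_(n + n)) : 'rV['F_2]_n :=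
  \sum_(l <- w) (if l.2 then lam C l.1 else - lam C l.1).

Definition rac_rel (n : nat) (r : word 'I_(n + n)) : Prop :=
  (exists i : 'I_(n + n), r = [:: (i, true); (i, true)]) \/
  (exists i j : 'I_(n + n), (i < j)%N /\ (nat_of_ord j != i + n)%N /\
     r = [:: (i, true); (j, true); (i, true); (j, true)]).

(** alpha_{n+j+1} = s_{n+j+1} s_{j+1} s_{j+2}^{c_{j,j+1}} ... s_n^{c_{j,n}}
    (0-based j : 'I_n). *)
Definition alpha (n : nat) (C : 'M['F_2]_n) (j : 'I_n) : word 'I_(n + n) :=
  (rshift n j, true) :: (lshift n j, true) ::
  map (fun k => (lshift n k, true))
      (filter (fun k : 'I_n => (j < k)%N && (C j k == 1)) (enum 'I_n)).

(** The relators x_{p,q} on generators a_{n+1..2n} (0-based p q : 'I_n). *)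
Definition xpq (n : nat) (C : 'M['F_2]_n) (p q : 'I_n) : word 'I_n :=
  if C p q == 0 then [:: (p, true); (q, true); (p, false); (q, false)]
  else [:: (p, true); (q, false); (p, false); (q, false)].

Definition bott_rel (n : nat) (C : 'M['F_2]_n) (r : word 'I_n) : Prop :=
  exists p q : 'I_n, (p < q)%N /\ r = xpq C p q.

(* The words [coset_rep c], products of the s_k (k <= n) with c_k = 1, form a
   Schreier transversal of the kernel of phi: the s_k (k <= n) commute pairwise,
   are involutions and are sent to the basis of Z_2^n.  Reidemeister-Schreier
   rewriting ([schreier]) with respect to it sends s_{n+j}, read in the coset
   c, to alpha_j or alpha_j^-1 according to c_j, and the other letters to the
   empty word.  Hence the alpha_j generate the kernel, and every Coxeter
   relator, read from any coset, rewrites to a trivial word or to a cyclic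
   rotation of some x_{p,q}^{+-1}; conversely x_{p,q} is the rewrite of
   (s_{n+p} s_{n+q})^2 read from the trivial coset. *)

From mathcomp Require Import all_boot all_algebra.
Import GRing.Theory.
Set Implicit Arguments. Unset Strict Implicit. Unset Printing Implicit Defensive.
Local Open Scope ring_scope.

Lemma winv_cons I (l : I * bool) (u : word I) : winv (l :: u) = winv u ++ [:: linv l].
Proof. by rewrite /winv /= rev_cons cats1. Qed.

Lemma winvK I : involutive (@winv I).
Proof.
move=> u; rewrite /winv map_rev revK -map_comp.
by elim: u => [|[x b] u IH] //=; rewrite IH /linv negbK.
Qed.

Lemma subst_word_cons I J (f : I -> word J) l u :
  subst_word f (l :: u) = (if l.2 then f l.1 else winv (f l.1)) ++ subst_word f u.
Proof. by []. Qed.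

Lemma subst_word1 I J (f : I -> word J) l :
  subst_word f [:: l] = if l.2 then f l.1 else winv (f l.1).
Proof. by rewrite /subst_word /= cats0. Qed.

Lemma subst_word_cat I J (f : I -> word J) u v :
  subst_word f (u ++ v) = subst_word f u ++ subst_word f v.
Proof. by rewrite /subst_word map_cat flatten_cat. Qed.

Section Presentation.

Variables (I : Type) (R : word I -> Prop).
Local Notation "u ~ v" := (pres_eq R u v) (at level 70).

Lemma pres_eq_catl w u v : u ~ v -> w ++ u ~ w ++ v.
Proof.
elim=> {u v} [u|u v _ IH|u v w' _ IH1 _ IH2|u v x b|u v r Hr].
- exact: pres_refl.
- exact: pres_sym IH.
- exact: pres_trans IH1 IH2.
- by rewrite !catA; apply: pres_cancel.
- by rewrite !catA -(catA _ r); apply: pres_rel.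
Qed.

Lemma pres_eq_catr w u v : u ~ v -> u ++ w ~ v ++ w.
Proof.
elim=> {u v} [u|u v _ IH|u v w' _ IH1 _ IH2|u v x b|u v r Hr].
- exact: pres_refl.
- exact: pres_sym IH.
- exact: pres_trans IH1 IH2.
- by rewrite -!catA; apply: pres_cancel.
- by rewrite -!catA; apply: pres_rel.
Qed.

Lemma pres_eq_cat u u' v v' : u ~ u' -> v ~ v' -> u ++ v ~ u' ++ v'.
Proof. by move=> /(pres_eq_catr v) uu' /(pres_eq_catl u') vv'; apply: pres_trans vv'. Qed.

Lemma pres_eq_rel r : R r -> r ~ [::].
Proof. by move=> Rr; have := pres_rel [::] [::] Rr; rewrite /= cats0. Qed.

Lemma pres_eq_mulwinv w : w ++ winv w ~ [::].
Proof.
elim: w => [|[x b] w IH]; first exact: pres_refl.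
have -> : ((x, b) :: w) ++ winv ((x, b) :: w)
          = [:: (x, b)] ++ (w ++ winv w) ++ [:: (x, ~~ b)].
  by rewrite winv_cons /= catA.
apply: pres_trans (pres_eq_catl _ (pres_eq_catr _ IH)) _.
exact: (pres_cancel R [::] [::] x b).
Qed.

Lemma pres_eq_winvmul w : winv w ++ w ~ [::].
Proof. by have := pres_eq_mulwinv (winv w); rewrite winvK. Qed.

Lemma pres_eq1_winv r : r ~ [::] -> winv r ~ [::].
Proof.
move=> r1; apply: pres_trans (pres_eq_winvmul r).
by rewrite -{1}(cats0 (winv r)); apply/pres_eq_catl/pres_sym.
Qed.

Lemma pres_eq1_rot k r : r ~ [::] -> rot k r ~ [::].
Proof.
rewrite -{1}(cat_take_drop k r) /rot => r1.
set x := take k r in r1 *; set y := drop k r in r1 *.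
apply: (pres_trans _ (pres_eq_mulwinv y)); apply: pres_eq_catl.
apply: (@pres_trans _ _ _ ((x ++ y) ++ winv y)).
  by rewrite -catA -{1}(cats0 x); apply/pres_eq_catl/pres_sym/pres_eq_mulwinv.
by rewrite -[winv y]cat0s; apply: pres_eq_catr.
Qed.

End Presentation.

Lemma pres_eq_commute_letter (I : eqType) (R : word I -> Prop) x (s : word I) :
  (forall y, y \in s -> pres_eq R [:: y; x] [:: x; y]) ->
  pres_eq R (s ++ [:: x]) (x :: s).
Proof.
elim: s => [|y s IH] xs /=; first exact: pres_refl.
apply: pres_trans (_ : pres_eq R ([:: y] ++ x :: s) _).
  by apply/(pres_eq_catl [:: y])/IH => z zs; apply: xs; rewrite inE zs orbT.
exact: (pres_eq_catr s (xs y (mem_head _ _))).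
Qed.

Lemma pres_eq_subst I J (R : word I -> Prop) (S : word J -> Prop) (f : I -> word J) :
    (forall r, R r -> pres_eq S (subst_word f r) [::]) ->
  forall u v, pres_eq R u v -> pres_eq S (subst_word f u) (subst_word f v).
Proof.
move=> fR u v; elim=> {u v} [u|u v _ IH|u v w _ IH1 _ IH2|u v x b|u v r Rr].
- exact: pres_refl.
- exact: pres_sym IH.
- exact: pres_trans IH1 IH2.
- rewrite !subst_word_cat !subst_word_cons /=; apply: pres_eq_catl.
  rewrite catA -{2}(cat0s (subst_word f v)); apply: pres_eq_catr.
  by case: b; [exact: pres_eq_mulwinv | exact: pres_eq_winvmul].
- rewrite !subst_word_cat; apply: pres_eq_catl.
  by rewrite -{2}(cat0s (subst_word f v)); apply/pres_eq_catr/fR.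
Qed.

Lemma F2_cases (x : 'F_2) : x = 0 \/ x = 1.
Proof. by case: x => [[|[|m]]] // H; [left | right]; apply: val_inj. Qed.

Lemma F2_addr1_eq0 (x : 'F_2) : (x + 1 == 0) = ~~ (x == 0).
Proof. by case: (F2_cases x) => ->. Qed.

Lemma addrr_rowF2 n (v : 'rV['F_2]_n) : v + v = 0.
Proof. by rewrite -[v]scale1r -scalerDl (_ : 1 + 1 = 0) ?scale0r //; apply/val_inj. Qed.

Lemma oppr_rowF2 n (v : 'rV['F_2]_n) : - v = v.
Proof. by rewrite -[- v]add0r -(addrr_rowF2 v) addrK. Qed.

Variant gen_spec n : 'I_(n + n) -> Type :=
  | GenL k : gen_spec (lshift n k)
  | GenR k : gen_spec (rshift n k).

Lemma genP n (i : 'I_(n + n)) : gen_spec i.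
Proof. by rewrite -(splitK i); case: (split i) => k; constructor. Qed.

Section RightAngledCoxeter.

Variable n : nat.
Local Notation "u =W v" := (pres_eq (@rac_rel n) u v) (at level 70).
Local Notation lgen k := (lshift n k, true).
Local Notation rgen k := (rshift n k, true).

Definition lword (s : seq 'I_n) : word 'I_(n + n) := [seq lgen k | k <- s].

Lemma lword_cat s1 s2 : lword (s1 ++ s2) = lword s1 ++ lword s2.
Proof. exact: map_cat. Qed.

Lemma rac_sq (i : 'I_(n + n)) : rac_rel [:: (i, true); (i, true)].
Proof. by left; exists i. Qed.

Lemma pres_eq_gen_inv (x : 'I_(n + n)) b : [:: (x, b)] =W [:: (x, true)].
Proof.
case: b; first exact: pres_refl.
apply: pres_trans (_ : _ =W [:: (x, false)] ++ [:: (x, true); (x, true)] ++ [::]) _.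
  by rewrite cats0; apply/pres_sym/(pres_eq_catl [:: (x, false)])/pres_eq_rel/rac_sq.
exact: (pres_cancel _ [::] [:: (x, true)] x false).
Qed.

Lemma rac_commute (i j : 'I_(n + n)) : (i < j)%N -> (nat_of_ord j != i + n)%N ->
  [:: (j, true); (i, true)] =W [:: (i, true); (j, true)].
Proof.
move=> ij jin; have sqij : rac_rel [:: (i, true); (j, true); (i, true); (j, true)].
  by right; exists i, j.
apply: pres_trans (_ : _ =W [:: (i, true); (i, true)] ++ [:: (j, true); (i, true)]) _.
  exact/pres_sym/(pres_rel [::] _ (rac_sq i)).
apply: pres_trans (_ : _ =W [:: (i, true); (i, true); (j, true); (i, true)]
                             ++ [:: (j, true); (j, true)] ++ [::]) _.
  by rewrite cats0; apply/pres_sym/(pres_eq_catl [:: _; _; _; _])/pres_eq_rel/rac_sq.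
exact: (pres_rel [:: (i, true)] [:: (j, true)] sqij).
Qed.

Lemma lgen_commute a b : [:: lgen a; lgen b] =W [:: lgen b; lgen a].
Proof.
have lgen_far (k m : 'I_n) : ((m : nat) != k + n)%N.
  by rewrite neq_ltn (leq_trans (ltn_ord m)) ?leq_addl.
case: (ltngtP a b) => [ab|ba|/val_inj->]; last exact: pres_refl.
- by apply/pres_sym/rac_commute; [exact: ab | exact: lgen_far].
- by apply: rac_commute; [exact: ba | exact: lgen_far].
Qed.

Lemma lgen_rgen_commute k j : k != j -> [:: rgen j; lgen k] =W [:: lgen k; rgen j].
Proof.
move=> kj; apply: rac_commute => /=; first by rewrite (leq_trans (ltn_ord k)) ?leq_addr.
by rewrite addnC eqn_add2r eq_sym.
Qed.

Lemma lgen_lword_commute k s : lgen k :: lword s =W lword s ++ [:: lgen k].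
Proof. by apply/pres_sym/pres_eq_commute_letter => _ /mapP[m _ ->]; apply: lgen_commute. Qed.

Lemma lword_commute s1 s2 : lword s1 ++ lword s2 =W lword s2 ++ lword s1.
Proof.
elim: s1 => [|k s1 IH]; first by rewrite cats0; apply: pres_refl.
apply: pres_trans (pres_eq_catl [:: lgen k] IH) _.
have -> : lword s2 ++ lword (k :: s1) = (lword s2 ++ [:: lgen k]) ++ lword s1.
  by rewrite -catA.
exact: (pres_eq_catr _ (lgen_lword_commute k s2)).
Qed.

Lemma lword_perm s1 s2 : perm_eq s1 s2 -> lword s1 =W lword s2.
Proof.
move=> p12; apply: (catCA_perm_ind (P := fun s => lword s1 =W lword s)) p12 _.
  move=> u v w /pres_trans; apply; rewrite !lword_cat !catA.
  exact/pres_eq_catr/lword_commute.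
exact: pres_refl.
Qed.

Lemma winv_lword s : winv (lword s) =W lword (rev s).
Proof.
elim: s => [|k s IH]; first exact: pres_refl.
rewrite winv_cons rev_cons -cats1 lword_cat.
exact: pres_eq_cat IH (pres_eq_gen_inv _ _).
Qed.

End RightAngledCoxeter.

Section RealBottTower.

Variables (n : nat) (C : 'M['F_2]_n).
Local Notation "u =W v" := (pres_eq (@rac_rel n) u v) (at level 70).
Local Notation "u =B v" := (pres_eq (bott_rel C) u v) (at level 70).
Local Notation lgen k := (lshift n k, true).
Local Notation rgen k := (rshift n k, true).
Local Notation subst_alpha := (subst_word (alpha C)).

Definition row_supp (c : 'rV['F_2]_n) : seq 'I_n := [seq k <- enum 'I_n | c 0 k == 1].

Definition coset_rep (c : 'rV['F_2]_n) : word 'I_(n + n) := lword (row_supp c).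

Definition alpha_seq (j : 'I_n) : seq 'I_n :=
  j :: [seq k : 'I_n <- enum 'I_n | (j < k)%N && (C j k == 1)].

Lemma alphaE j : alpha C j = rgen j :: lword (alpha_seq j).
Proof. by []. Qed.

Lemma mem_row_supp c k : (k \in row_supp c) = (c 0 k == 1).
Proof. by rewrite mem_filter mem_enum andbT. Qed.

Lemma row_supp_uniq c : uniq (row_supp c).
Proof. by rewrite filter_uniq ?enum_uniq. Qed.

Lemma coset_rep0 : coset_rep 0 = [::].
Proof.
by rewrite /coset_rep /row_supp (@eq_filter _ _ pred0) ?filter_pred0 // => k; rewrite mxE.
Qed.

Lemma evecE (j k : 'I_n) : evec j 0 k = (k == j)%:R.
Proof. by rewrite mxE. Qed.

Lemma sum_evec_row_supp c : \sum_(k <- row_supp c) evec k = c.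
Proof.
apply/rowP => k; rewrite big_filter big_enum_cond /= summxE big_mkcond /=.
rewrite (bigD1 k) //= big1 ?addr0 => [|i /negbTE ik]; last first.
  by case: ifP => // _; rewrite evecE eq_sym ik.
by rewrite evecE eqxx; case: (F2_cases (c 0 k)) => ->.
Qed.

Lemma lam_lshift k : lam C (lshift n k) = evec k.
Proof. by rewrite /lam (unsplitK (inl k)). Qed.

Lemma lam_rshift j : lam C (rshift n j) = \sum_(k <- alpha_seq j) evec k.
Proof.
rewrite /lam (unsplitK (inr j)) big_cons big_filter big_enum_cond /=; congr (_ + _).
rewrite big_mkcondr /=; apply: eq_bigr => k _.
by case: (F2_cases (C j k)) => ->; rewrite ?scale0r ?scale1r.
Qed.

Lemma lam_rshiftE j k :
  lam C (rshift n j) 0 k = (k == j)%:R + (if (j < k)%N then C j k else 0).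
Proof.
rewrite lam_rshift big_cons mxE evecE summxE big_filter big_enum_cond /=.
congr (_ + _); rewrite big_mkcond /= (bigD1 k) //= big1 ?addr0 => [|i /negbTE ik].
  by rewrite evecE eqxx; case: (j < k)%N; case: (F2_cases (C j k)) => ->.
by case: ifP => // _; rewrite evecE eq_sym ik.
Qed.

Lemma lam_rshift_diag j : lam C (rshift n j) 0 j = 1.
Proof. by rewrite lam_rshiftE eqxx ltnn addr0. Qed.

Lemma lam_rshift_lt (a b : 'I_n) : (a < b)%N -> lam C (rshift n b) 0 a = 0.
Proof. by move=> ab; rewrite lam_rshiftE -val_eqE (ltn_eqF ab) ltnNge ltnW ?addr0. Qed.

Lemma lam_rshift_gt (a b : 'I_n) : (a < b)%N -> lam C (rshift n a) 0 b = C a b.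
Proof. by move=> ab; rewrite lam_rshiftE -val_eqE (gtn_eqF ab) ab add0r. Qed.

Lemma phiE w : phi C w = \sum_(l <- w) lam C l.1.
Proof. by apply: eq_bigr => l _; case: ifP; rewrite ?oppr_rowF2. Qed.

Lemma phi_cons l w : phi C (l :: w) = lam C l.1 + phi C w.
Proof. by rewrite !phiE big_cons. Qed.

Lemma phi_cat u v : phi C (u ++ v) = phi C u + phi C v.
Proof. by rewrite !phiE big_cat. Qed.

Lemma phi_winv w : phi C (winv w) = phi C w.
Proof. by rewrite !phiE big_rev big_map. Qed.

Lemma phi_lword s : phi C (lword s) = \sum_(k <- s) evec k.
Proof. by rewrite phiE big_map; apply: eq_bigr => k _; rewrite lam_lshift. Qed.

Lemma phi_alpha j : phi C (alpha C j) = 0.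
Proof. by rewrite alphaE phi_cons phi_lword -lam_rshift addrr_rowF2. Qed.

Lemma phi_alpha_letter j b : phi C (if b then alpha C j else winv (alpha C j)) = 0.
Proof. by case: b; rewrite ?phi_winv phi_alpha. Qed.

Lemma phi_subst_alpha u : phi C (subst_alpha u) = 0.
Proof.
elim: u => [|[j b] u IH]; first by rewrite phiE big_nil.
by rewrite subst_word_cons phi_cat IH phi_alpha_letter addr0.
Qed.

Lemma phi_rac_rel r : rac_rel r -> phi C r = 0.
Proof.
case=> [[i ->]|[i [j [_ [_ ->]]]]]; rewrite !phi_cons phiE big_nil addr0.
  exact: addrr_rowF2.
by rewrite addrA addrr_rowF2.
Qed.

Lemma lgen_coset_rep k c : lgen k :: coset_rep c =W coset_rep (evec k + c).
Proof.
have mem_supp_add m : (m \in row_supp (evec k + c)) = (m == k) (+) (m \in row_supp c).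
  rewrite !mem_row_supp mxE evecE; case: (eqVneq m k) => [->|] /=; last by rewrite add0r.
  by case: (F2_cases (c 0 k)) => ->.
rewrite -[lgen k :: _]/(lword (k :: row_supp c)).
have [ck0|ck1] := F2_cases (c 0 k).
  apply/lword_perm/uniq_perm; rewrite ?row_supp_uniq //=.
    by rewrite row_supp_uniq mem_row_supp ck0.
  by move=> m; rewrite inE mem_supp_add; case: eqVneq => [->|]; rewrite ?mem_row_supp ?ck0.
have supp_c : perm_eq (row_supp c) (k :: row_supp (evec k + c)).
  apply: uniq_perm; rewrite ?row_supp_uniq //=.
    by rewrite row_supp_uniq mem_supp_add eqxx mem_row_supp ck1.
  by move=> m; rewrite inE mem_supp_add; case: eqVneq => [->|]; rewrite ?mem_row_supp ?ck1.
apply: pres_trans (pres_eq_catl [:: lgen k] (lword_perm supp_c)) _.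
exact: (pres_rel [::] _ (rac_sq (lshift n k))).
Qed.

Lemma lword_coset_rep s c :
  lword s ++ coset_rep c =W coset_rep (\sum_(k <- s) evec k + c).
Proof.
elim: s => [|k s IH]; first by rewrite big_nil add0r; apply: pres_refl.
rewrite big_cons -addrA; apply: pres_trans (lgen_coset_rep k _).
exact: (pres_eq_catl [:: lgen k] IH).
Qed.

Lemma coset_rep_lgen c k : coset_rep c ++ [:: lgen k] =W coset_rep (c + evec k).
Proof.
have := lword_coset_rep (row_supp c ++ [:: k]) 0.
by rewrite coset_rep0 !cats0 lword_cat big_cat big_seq1 sum_evec_row_supp addr0.
Qed.

Lemma coset_rep_rgen_commute (c : 'rV['F_2]_n) (j : 'I_n) : c 0 j = 0 ->
  coset_rep c ++ [:: rgen j] =W rgen j :: coset_rep c.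
Proof.
move=> cj0; apply: pres_eq_commute_letter => y /mapP[k]; rewrite mem_row_supp => ck ->.
by apply/pres_sym/lgen_rgen_commute; apply: contraTneq ck => ->; rewrite cj0.
Qed.

Lemma coset_rep_rgen (c : 'rV['F_2]_n) (j : 'I_n) :
  coset_rep c ++ [:: rgen j] =W
  subst_alpha [:: (j, c 0 j == 0)] ++ coset_rep (c + lam C (rshift n j)).
Proof.
rewrite subst_word1 /=; set v := lam C (rshift n j).
have vcv : v + (c + v) = c by rewrite addrCA addrr_rowF2 addr0.
have [cj0|cj1] := F2_cases (c 0 j); rewrite ?cj0 ?cj1 ?eqxx ?oner_eq0 alphaE.
  apply: pres_trans (coset_rep_rgen_commute cj0) _.
  apply: (pres_eq_catl [:: rgen j]); apply: pres_sym.
  by have := lword_coset_rep (alpha_seq j) (c + v); rewrite -lam_rshift vcv.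
have cvj0 : (c + v) 0 j = 0 by rewrite mxE cj1 lam_rshift_diag; apply: val_inj.
rewrite winv_cons -catA; apply: pres_sym.
apply: pres_trans (pres_eq_cat (winv_lword _) (pres_eq_catr _ (pres_eq_gen_inv _ _))) _.
apply: pres_trans (pres_eq_catl _ (pres_sym (coset_rep_rgen_commute cvj0))) _.
rewrite catA; apply: pres_eq_catr.
by have := lword_coset_rep (rev (alpha_seq j)) (c + v); rewrite big_rev -lam_rshift vcv.
Qed.

Definition schreier_letter (c : 'rV['F_2]_n) (l : 'I_(n + n) * bool) : word 'I_n :=
  if split l.1 is inr j then [:: (j, c 0 j == 0)] else [::].

(* Letter signs are ignored, as every generator of W is an involution. *)
Fixpoint schreier (c : 'rV['F_2]_n) (w : word 'I_(n + n)) : word 'I_n :=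
  if w is l :: w' then schreier_letter c l ++ schreier (c + lam C l.1) w' else [::].

Lemma schreier_letter_lshift c k b : schreier_letter c (lshift n k, b) = [::].
Proof. by rewrite /schreier_letter (unsplitK (inl k)). Qed.

Lemma schreier_letter_rshift c j b : schreier_letter c (rshift n j, b) = [:: (j, c 0 j == 0)].
Proof. by rewrite /schreier_letter (unsplitK (inr j)). Qed.

Lemma schreier_cat c u v :
  schreier c (u ++ v) = schreier c u ++ schreier (c + phi C u) v.
Proof.
elim: u c => [|l u IH] c /=; first by rewrite phiE big_nil addr0.
by rewrite IH phi_cons addrA catA.
Qed.

Lemma schreier_lshift c b s : schreier c [seq (lshift n k, b) | k <- s] = [::].
Proof. by elim: s c => [|k s IH] c //=; rewrite schreier_letter_lshift IH. Qed.

Lemma coset_rep_letter c l :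
  coset_rep c ++ [:: l] =W subst_alpha (schreier_letter c l) ++ coset_rep (c + lam C l.1).
Proof.
case: l => i b; apply: pres_trans (pres_eq_catl _ (pres_eq_gen_inv i b)) _.
case: (genP i) => k.
  by rewrite schreier_letter_lshift lam_lshift; apply: coset_rep_lgen.
by rewrite schreier_letter_rshift; apply: coset_rep_rgen.
Qed.

Lemma coset_rep_schreier c w :
  coset_rep c ++ w =W subst_alpha (schreier c w) ++ coset_rep (c + phi C w).
Proof.
elim: w c => [|l w IH] c.
  by rewrite cats0 phiE big_nil addr0; apply: pres_refl.
rewrite /= subst_word_cat phi_cons addrA -catA.
apply: pres_trans
  (_ : _ =W (subst_alpha (schreier_letter c l) ++ coset_rep (c + lam C l.1)) ++ w) _.
  by rewrite -cat1s catA; apply/pres_eq_catr/coset_rep_letter.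
by rewrite -catA; apply/pres_eq_catl/IH.
Qed.

Definition rgen_rel (a b : 'I_n) : word 'I_(n + n) := [:: rgen a; rgen b; rgen a; rgen b].

Lemma rac_rgen_rel (a b : 'I_n) : (a < b)%N -> rac_rel (rgen_rel a b).
Proof.
move=> ab; right; exists (rshift n a), (rshift n b); rewrite /= ltn_add2l ab.
by rewrite -addnA eqn_add2l neq_ltn (leq_trans (ltn_ord b)) ?leq_addl.
Qed.

Lemma schreier_rgen_rel c (a b : 'I_n) : (a < b)%N ->
  schreier c (rgen_rel a b) =
  [:: (a, c 0 a == 0); (b, c 0 b + C a b == 0); (a, c 0 a + 1 == 0); (b, c 0 b + 1 == 0)].
Proof.
move=> ab; rewrite /= !schreier_letter_rshift !mxE !lam_rshift_diag.
rewrite (lam_rshift_lt ab) (lam_rshift_gt ab) !addr0.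
by case: (F2_cases (c 0 b)) => ->; case: (F2_cases (C a b)) => ->.
Qed.

Lemma schreier0_rgen_rel (a b : 'I_n) : (a < b)%N -> schreier 0 (rgen_rel a b) = xpq C a b.
Proof.
move=> ab; rewrite schreier_rgen_rel // /xpq !mxE !add0r.
by case: (F2_cases (C a b)) => ->.
Qed.

(* Each word below is a cyclic rotation of x_{a,b} or of its inverse. *)
Lemma bott_rel_conj (a b : 'I_n) (x y : 'F_2) : (a < b)%N ->
  [:: (a, x == 0); (b, y + C a b == 0); (a, x + 1 == 0); (b, y + 1 == 0)] =B [::].
Proof.
move=> ab; have rot_rel k : rot k (xpq C a b) =B [::] /\ rot k (winv (xpq C a b)) =B [::].
  have xpq1 : xpq C a b =B [::] by apply: pres_eq_rel; exists a, b.
  by split; apply: pres_eq1_rot => //; apply: pres_eq1_winv.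
move: rot_rel; rewrite /xpq.
case: (F2_cases (C a b)) => ->; case: (F2_cases x) => ->; case: (F2_cases y) => -> /= rot_rel.
all: by [case: (rot_rel 0%N) | case: (rot_rel 1%N) | case: (rot_rel 2%N) | case: (rot_rel 3%N)].
Qed.

Lemma schreier_rac_rel c r : rac_rel r -> schreier c r =B [::].
Proof.
case=> [[i ->]|[i [j [ij [jin ->]]]]].
  case: (genP i) => k /=; rewrite ?schreier_letter_lshift ?schreier_letter_rshift.
    exact: pres_refl.
  rewrite mxE lam_rshift_diag F2_addr1_eq0.
  exact: (pres_cancel _ [::] [::] k (c 0 k == 0)).
move: ij jin; case: (genP i) => a; case: (genP j) => b.
- by rewrite /= !schreier_letter_lshift; move=> _ _; apply: pres_refl.
- move=> _; rewrite /= addnC eqn_add2r => ba.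
  rewrite !schreier_letter_lshift !schreier_letter_rshift !lam_lshift !mxE.
  rewrite (negbTE (ba : b != a)).
  rewrite lam_rshift_diag !addr0 F2_addr1_eq0.
  exact: (pres_cancel _ [::] [::] b (c 0 b == 0)).
- by rewrite /= ltnNge (leq_trans (ltnW (ltn_ord b))) ?leq_addr.
- move=> ab _; have {}ab : (a < b)%N by rewrite -(ltn_add2l n).
  by rewrite (schreier_rgen_rel c ab); apply: bott_rel_conj.
Qed.

Lemma schreier_pres_eq c w1 w2 : w1 =W w2 -> schreier c w1 =B schreier c w2.
Proof.
elim=> {w1 w2} [w|u v _ IH|u v w _ IH1 _ IH2|u v x b|u v r Rr].
- exact: pres_refl.
- exact: pres_sym IH.
- exact: pres_trans IH1 IH2.
- rewrite !schreier_cat /=; move: (c + phi C u) => c'.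
  rewrite -[c' + _ + _]addrA addrr_rowF2 addr0; apply: pres_eq_catl.
  rewrite catA -{2}(cat0s (schreier c' v)); apply: pres_eq_catr.
  case: (genP x) => k; rewrite ?schreier_letter_lshift ?schreier_letter_rshift.
    exact: pres_refl.
  rewrite mxE lam_rshift_diag F2_addr1_eq0.
  exact: (pres_cancel _ [::] [::] k).
- rewrite !schreier_cat (phi_rac_rel Rr) addr0; apply: pres_eq_catl.
  by rewrite -{2}(cat0s (schreier _ v)); apply/pres_eq_catr/schreier_rac_rel.
Qed.

Lemma schreier_alpha_letter j b :
  schreier 0 (if b then alpha C j else winv (alpha C j)) = [:: (j, b)].
Proof.
case: b.
  by rewrite alphaE -cat1s schreier_cat schreier_lshift /= schreier_letter_rshift mxE.
rewrite alphaE winv_cons schreier_cat phi_winv phi_lword -lam_rshift add0r.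
rewrite /winv -map_comp -map_rev schreier_lshift /=.
by rewrite schreier_letter_rshift lam_rshift_diag.
Qed.

Lemma schreier_subst_alpha u : schreier 0 (subst_alpha u) = u.
Proof.
elim: u => [|[j b] u IH] //.
by rewrite subst_word_cons schreier_cat schreier_alpha_letter phi_alpha_letter add0r IH.
Qed.

Lemma subst_alpha_bott_rel r : bott_rel C r -> subst_alpha r =W [::].
Proof.
case=> p [q [pq ->]]; have := coset_rep_schreier 0 (rgen_rel p q).
rewrite coset_rep0 (phi_rac_rel (rac_rgen_rel pq)) add0r coset_rep0 cats0.
rewrite (schreier0_rgen_rel pq) => /pres_sym /pres_trans; apply.
exact/pres_eq_rel/rac_rgen_rel.
Qed.

End RealBottTower.

Theorem theorem2p1 (n : nat) (C : 'M['F_2]_n) :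
  (0 < n)%N -> is_bott_matrix C ->
  (* the alpha_j lie in the kernel of W -> Z_2^n *)
  (forall u : word 'I_n, phi C (subst_word (alpha C) u) = 0) /\
  (* they generate the kernel *)
  (forall w : word 'I_(n + n), phi C w = 0 ->
     exists u : word 'I_n, pres_eq (@rac_rel n) (subst_word (alpha C) u) w) /\
  (* the x_{p,q} form a complete set of defining relations *)
  (forall u v : word 'I_n,
     pres_eq (@rac_rel n) (subst_word (alpha C) u) (subst_word (alpha C) v)
     <-> pres_eq (bott_rel C) u v).
Proof.
move=> _ _; split; [exact: phi_subst_alpha | split].
- move=> w phiw0; exists (schreier C 0 w); apply: pres_sym.
  by have := coset_rep_schreier C 0 w; rewrite coset_rep0 add0r phiw0 coset_rep0 cats0.
- move=> u v; split; last exact/pres_eq_subst/subst_alpha_bott_rel.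
  by move=> /(schreier_pres_eq C 0); rewrite !schreier_subst_alpha.
Qed.
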